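(* (a) For the complete graph $K_n$ on $n$ vertices, $\mathrm{SOL}(K_n)=\Delta_n:=\{x\in\mathbb{R}^n\mid x\geq 0,\ \mathbf{e}^\top x=1\}$. (b) If $G$ is a forest, $x\in\mathrm{SOL}(G)$ and $\sigma(x)=V(G)$, then $G$ is a disjoint union of copies of $K_1$ and $K_2$. (c) If $G$ is a forest and $x\in\mathrm{SOL}(G)$, then the induced subgraph $G_{\sigma(x)}$ is a disjoint union of copies of $K_1$ and $K_2$. (d) If $R_{n,d}$ is a $d$-regular graph on $n$ vertices, then $\beta(R_{n,d})\geq \frac{n}{d+1}$.
   Context: All graphs are simple (finite, undirected, no loops). For a graph $H$ with adjacency matrix $A_H$, $\mathrm{SOL}(H)$ is the set of $x$ with $x\geq 0$, $(A_H+I)x\geq\mathbf{e}$ and $x^\top((A_H+I)x-\mathbf{e})=0$ ($I$ identity, $\mathbf{e}$ all-ones vector). $\sigma(x):=\{i\mid x_i>0\}$; $G_S$ is the subgraph induced by $S$. A forest is a graph without cycles. $\beta(G)$ is the minimum cardinality of a maximal independent set of $G$. *)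

From mathcomp Require Import all_boot all_order all_algebra.
Set Implicit Arguments. Unset Strict Implicit. Unset Printing Implicit Defensive.
Import Order.TTheory GRing.Theory Num.Theory.
Local Open Scope ring_scope.

Definition simple_graph (n : nat) (e : rel 'I_n) : Prop :=
  symmetric e /\ irreflexive e.

Definition complete_rel (n : nat) : rel 'I_n := fun i j => i != j.

Definition adjmx (R : nzRingType) (n : nat) (e : rel 'I_n) : 'M[R]_n :=
  \matrix_(i, j) (if e i j then 1 else 0).

Definition SOL (R : realFieldType) (n : nat) (e : rel 'I_n) (x : 'cV[R]_n) : Prop :=
  let M := adjmx R e + 1%:M in
  (forall i, 0 <= x i 0) /\
  (forall i, 1 <= (M *m x) i 0) /\
  x^T *m (M *m x - const_mx 1) = 0.

Definition supp (R : realFieldType) (n : nat) (x : 'cV[R]_n) : {set 'I_n} :=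
  [set i | 0 < x i 0].

Definition forest (n : nat) (e : rel 'I_n) : Prop :=
  forall s : seq 'I_n, (3 <= size s)%N -> ~~ ucycleb e s.

(* the induced subgraph G_S is a disjoint union of copies of K1 and K2,
   i.e. every vertex of S has at most one neighbour inside S *)
Definition union_K1_K2_on (n : nat) (e : rel 'I_n) (S : {set 'I_n}) : Prop :=
  forall v, v \in S -> (#|[set w in S | e v w]| <= 1)%N.

Definition regular (n : nat) (e : rel 'I_n) (d : nat) : Prop :=
  forall v, #|[set w | e v w]| = d.

Definition independent (n : nat) (e : rel 'I_n) (S : {set 'I_n}) : bool :=
  [forall i in S, forall j in S, ~~ e i j].

Definition maximal_independent (n : nat) (e : rel 'I_n) (S : {set 'I_n}) : bool :=
  independent e S && [forall U : {set 'I_n}, (S \proper U) ==> ~~ independent e U].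

Definition beta (n : nat) (e : rel 'I_n) : nat :=
  \big[minn/n]_(S : {set 'I_n} | maximal_independent e S) #|S|.

From mathcomp Require Import all_boot all_order all_algebra.
From mathcomp Require Import zify lra.
Import Order.TTheory GRing.Theory Num.Theory.
Set Implicit Arguments. Unset Strict Implicit.

(* Complementarity forces ((A+I)x)_i = 1 on the support of a solution x. So if
   u has two neighbours in the support, every support neighbour w of u has a
   second one besides u: otherwise 1 = ((A+I)x)_w = x_w + x_u, which is strictly
   less than ((A+I)x)_u = 1. The support vertices of degree at least two thus
   induce a subgraph of minimum degree two, and such a graph contains a cycle.
   For (a), (A+I)x = (e^T x) e on K_n; for (d), a maximal independent set S
   dominates the graph, so n <= (d+1)|S|. *)

Section CycleOfMinDegree2.

Variables (T : finType) (e : rel T).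
Hypotheses (e_sym : symmetric e) (e_irr : irreflexive e).

Lemma ucycle_of_chord u q c : path e u q -> uniq (u :: q) ->
  c \in q -> c != head u q -> e u c -> exists2 s, 3 <= size s & ucycleb e s.
Proof.
move=> pq uq /splitPr cq; case: q / cq pq uq => q1 q2 pq uq c_head euc.
exists (u :: rcons q1 c).
  by case: q1 c_head {pq uq} => [|y q1]; rewrite /= ?eqxx // size_rcons.
apply/andP; split.
  move: pq; rewrite /cycle rcons_path cat_path -cats1 cat_path last_cat /=.
  by rewrite (e_sym c) euc andbT => /and3P[-> ->].
apply: subseq_uniq uq; rewrite -cats1 /= eqxx.
by rewrite cat_subseq ?sub1seq ?mem_head.
Qed.

Lemma ucycle_of_min_degree2 (D : {set T}) : D != set0 ->
  (forall u, u \in D -> 1 < #|[set w in D | e u w]|) ->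
  exists2 s, 3 <= size s & ucycleb e s.
Proof.
case/set0Pn=> v vD minD.
(* Grow a path at its head u; when both chosen neighbours of u are already on it,
   one of them is not the next vertex of the path and closes a cycle. *)
suff: forall u q, u \in D -> path e u q -> uniq (u :: q) ->
    exists2 s, 3 <= size s & ucycleb e s by move/(_ v [::] vD); apply.
move=> u q; have [k] := ubnP (#|T| - size q).
elim: k u q => // k IHk u q lt_k uD pq uq.
have extend c : c \in [set w in D | e u w] -> c \notin u :: q ->
    exists2 s, 3 <= size s & ucycleb e s.
  rewrite inE => /andP[cD euc] cq; apply: (IHk c (u :: q)) => //=.
  - have : size (c :: u :: q) <= #|T| by rewrite -(card_uniqP _) ?max_card //= cq.
    by move: lt_k => /=; lia.
  - by rewrite e_sym euc.
  - by rewrite cq.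
have /card_gt1P[a [b [aN bN ab]]] := minD u uD.
case: (boolP (a \in u :: q)) => [aq|]; last exact: extend.
case: (boolP (b \in u :: q)) => [bq|]; last exact: extend.
have inq c : c \in [set w in D | e u w] -> c \in u :: q -> (c \in q) && e u c.
  rewrite inE in_cons => /andP[_ euc] /orP[/eqP cu|->]; last by rewrite euc.
  by move: euc; rewrite cu e_irr.
case/andP: (inq a aN aq) => {}aq eua; case/andP: (inq b bN bq) => {}bq eub.
have [a_head|a_head] := eqVneq a (head u q); last exact: (ucycle_of_chord pq uq aq).
by apply: (ucycle_of_chord pq uq bq) => //; rewrite -a_head eq_sym.
Qed.
End CycleOfMinDegree2.

Lemma leq_card_bigcup (T I : finType) (A : {pred I}) (F : I -> {set T}) :
  #|\bigcup_(i in A) F i| <= \sum_(i in A) #|F i|.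
Proof.
elim/big_rec2: _ => [|i m B _ le_B_m]; first by rewrite cards0.
by rewrite (leq_trans (leq_card_setU _ _)) ?leq_add2l.
Qed.

Lemma maximal_independent_dominating n (e : rel 'I_n) S v :
  simple_graph e -> maximal_independent e S -> v \notin S ->
  exists2 s, s \in S & e s v.
Proof.
case=> e_sym e_irr /andP[indS /forallP maxS] vS.
apply/exists_inP; apply: contraT; rewrite negb_exists_in => /forall_inP v_isolated.
have := maxS (v |: S); rewrite properUr ?sub1set //= => /negP[].
apply/forall_inP=> i; rewrite in_setU1 => /predU1P[->|iS];
  apply/forall_inP=> j; rewrite in_setU1 => /predU1P[->|jS].
- by rewrite e_irr.
- by rewrite e_sym v_isolated.
- exact: v_isolated.
- by move/forall_inP: indS => /(_ i iS)/forall_inP; apply.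
Qed.

Lemma maximal_independent_regular_card n d (e : rel 'I_n) S :
  simple_graph e -> regular e d -> maximal_independent e S -> n <= d.+1 * #|S|.
Proof.
move=> e_simple e_reg S_max.
have cover : [set: 'I_n] \subset \bigcup_(s in S) (s |: [set w | e s w]).
  apply/subsetP=> v _; apply/bigcupP; have [vS|vS] := boolP (v \in S).
    by exists v; rewrite ?setU11.
  have [s sS esv] := maximal_independent_dominating e_simple S_max vS.
  by exists s; rewrite // in_setU1 inE esv orbT.
have := subset_leq_card cover; rewrite cardsT card_ord => /leq_trans; apply.
rewrite (leq_trans (leq_card_bigcup _ _)) // mulnC -sum_nat_const leq_sum // => s _.
by rewrite cardsU1 e_reg; case: (_ \notin _).
Qed.

Lemma regular_beta n d (e : rel 'I_n) :
  simple_graph e -> regular e d -> n <= d.+1 * beta e.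
Proof.
move=> e_simple e_reg; rewrite /beta.
elim/big_ind: _ => [|a b le_a le_b|S S_max]; first by rewrite leq_pmull.
  by rewrite /minn; case: ltnP.
exact: maximal_independent_regular_card e_simple e_reg S_max.
Qed.

Local Open Scope ring_scope.

Section LinearComplementarity.

Variables (R : realFieldType) (n : nat) (e : rel 'I_n) (x : 'cV[R]_n).

Local Notation Mx := ((adjmx R e + 1%:M) *m x).

Lemma closed_adjmx_mulmxE i : Mx i 0 = x i 0 + \sum_(j | e i j) x j 0.
Proof.
rewrite mulmxDl mul1mx mxE addrC; congr (_ + _).
rewrite mxE [RHS]big_mkcond /=; apply: eq_bigr => j _; rewrite mxE.
by case: (e i j); rewrite ?mul1r ?mul0r.
Qed.

Lemma SOLP : SOL e x <->
  [/\ forall i, 0 <= x i 0, forall i, 1 <= Mx i 0 & forall i, 0 < x i 0 -> Mx i 0 = 1].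
Proof.
rewrite /SOL; set y := Mx; clearbody y; split.
  case=> x_ge0 [y_ge1 /matrixP/(_ 0 0)]; rewrite !mxE => compl; split=> // i xi_gt0.
  have {}compl : \sum_j x j 0 * (y j 0 - 1) = 0.
    by rewrite -[RHS]compl; apply: eq_bigr => j _; rewrite !mxE.
  have terms_ge0 j : true -> 0 <= x j 0 * (y j 0 - 1).
    by move=> _; rewrite mulr_ge0 ?subr_ge0.
  have /eqP := psumr_eq0P terms_ge0 compl (i := i) isT.
  by rewrite mulf_eq0 (gt_eqF xi_gt0) subr_eq0 => /eqP.
case=> x_ge0 y_ge1 y_tight; do 2!split=> //; apply/matrixP=> i j.
rewrite !mxE big1 // => k _; rewrite !mxE !ord1.
have [xk_gt0|] := ltP 0 (x k 0); first by rewrite y_tight // subrr mulr0.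
by rewrite le_eqVlt ltNge x_ge0 orbF => /eqP->; rewrite mul0r.
Qed.

Lemma SOL_supp_nbhd u w c : symmetric e -> SOL e x ->
  u \in supp x -> w \in supp x -> c \in supp x -> e u w -> e u c -> c != w ->
  exists2 c', c' \in supp x & e w c' && (c' != u).
Proof.
move=> e_sym /SOLP[x_ge0 _ tight]; rewrite !inE => xu xw xc euw euc cw.
have Mu := tight u xu; have Mw := tight w xw.
rewrite closed_adjmx_mulmxE (bigD1 w) // (bigD1 c) /= ?euc ?cw // in Mu.
rewrite closed_adjmx_mulmxE (bigD1 u) /= 1?e_sym // in Mw.
move: Mu Mw; set rest_u := \sum_(j | _) _; set rest_w := \sum_(j | _) _ => Mu Mw.
have rest_u_ge0 : 0 <= rest_u by rewrite sumr_ge0.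
have rest_w_neq0 : rest_w <> 0 by move=> rest_w0; lra.
have [j /andP[/andP[ewj ju] xj]] := psumr_neq0P (fun j _ => x_ge0 j) rest_w_neq0.
by exists j; rewrite ?inE ?ewj.
Qed.

End LinearComplementarity.

Lemma complete_closed_adjmx_mulmxE (R : realFieldType) n (x : 'cV[R]_n) i :
  ((adjmx R (@complete_rel n) + 1%:M) *m x) i 0 = \sum_j x j 0.
Proof.
rewrite closed_adjmx_mulmxE [RHS](bigD1 i) //=; congr (_ + _).
by apply: eq_bigl => j; rewrite /complete_rel eq_sym.
Qed.

Lemma SOL_complete (R : realFieldType) (n : nat) : (0 < n)%N ->
  forall x : 'cV[R]_n,
    SOL (@complete_rel n) x <-> ((forall i, 0 <= x i 0) /\ \sum_i x i 0 = 1).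
Proof.
move=> n_gt0 x; rewrite SOLP; split=> [[x_ge0 Mx_ge1 tight] | [x_ge0 sum1]].
  split=> //; have := Mx_ge1 (Ordinal n_gt0).
  rewrite complete_closed_adjmx_mulmxE => sum_ge1.
  have sum_neq0 : \sum_i x i 0 <> 0 by move=> sum0; rewrite sum0 ler10 in sum_ge1.
  have [i /andP[_ xi_gt0]] := psumr_neq0P (fun i _ => x_ge0 i) sum_neq0.
  by rewrite -(tight i xi_gt0) complete_closed_adjmx_mulmxE.
by split=> // i; rewrite complete_closed_adjmx_mulmxE sum1.
Qed.

Definition deg_ge2_in (n : nat) (e : rel 'I_n) (S : {set 'I_n}) : {set 'I_n} :=
  [set u in S | (1 < #|[set w in S | e u w]|)%N].

Lemma SOL_deg_ge2_closed (R : realFieldType) n (e : rel 'I_n) (x : 'cV[R]_n) u w :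
  symmetric e -> SOL e x -> u \in deg_ge2_in e (supp x) ->
  w \in supp x -> e u w -> w \in deg_ge2_in e (supp x).
Proof.
move=> e_sym sol /setIdP[uS /card_gt1P[a [b [aN bN ab]]]] wS euw.
have [c /setIdP[cS euc] cw] : exists2 c, c \in [set w in supp x | e u w] & c != w.
  by case: (eqVneq a w) => [aw|]; [exists b; rewrite // -aw eq_sym | exists a].
have [c' c'S /andP[ewc' c'u]] := SOL_supp_nbhd e_sym sol uS wS cS euw euc cw.
apply/setIdP; split=> //; apply/card_gt1P; exists u, c'.
by split; [apply/setIdP; rewrite e_sym | apply/setIdP | rewrite eq_sym].
Qed.

Lemma SOL_forest_supp (R : realFieldType) n (e : rel 'I_n) (x : 'cV[R]_n) :
  simple_graph e -> forest e -> SOL e x -> union_K1_K2_on e (supp x).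
Proof.
move=> [e_sym e_irr] e_forest sol v vS; rewrite leqNgt; apply/negP => v_deg.
pose D := deg_ge2_in e (supp x).
have [|u uD|s s3 cyc_s] := ucycle_of_min_degree2 e_sym e_irr (D := D).
- by apply/set0Pn; exists v; apply/setIdP.
- case/setIdP: (uD) => _ /leq_trans; apply.
  apply/subset_leq_card/subsetP=> w /setIdP[wS euw]; apply/setIdP.
  by split; first exact: SOL_deg_ge2_closed uD wS euw.
- by move: (e_forest s s3); rewrite cyc_s.
Qed.

Theorem lemma4 :
  (* (a) *)
  (forall (R : realFieldType) (n : nat), (0 < n)%N ->
     forall x : 'cV[R]_n,
       SOL (@complete_rel n) x <-> ((forall i, 0 <= x i 0) /\ \sum_i x i 0 = 1))
  /\
  (* (b) *)
  (forall (R : realFieldType) (n : nat) (e : rel 'I_n) (x : 'cV[R]_n),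
     simple_graph e -> forest e -> SOL e x -> supp x = [set: 'I_n] ->
     union_K1_K2_on e [set: 'I_n])
  /\
  (* (c) *)
  (forall (R : realFieldType) (n : nat) (e : rel 'I_n) (x : 'cV[R]_n),
     simple_graph e -> forest e -> SOL e x ->
     union_K1_K2_on e (supp x))
  /\
  (* (d) *)
  (forall (R : realFieldType) (n d : nat) (e : rel 'I_n),
     simple_graph e -> regular e d ->
     (n%:R / (d.+1)%:R : R) <= (beta e)%:R).
Proof.
split; first exact: SOL_complete.
split; first by move=> R n e x e_simple e_forest sol <-; exact: SOL_forest_supp.
split; first exact: SOL_forest_supp.
move=> R n d e e_simple e_reg.
by rewrite ler_pdivrMr ?ltr0Sn // -natrM ler_nat mulnC regular_beta.
Qed.
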